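(* Let $p\ge 1$, let $k_j>0$, let $\Gamma$ be a real symmetric positive definite $p\times p$ matrix, and let $B$ be a real symmetric $p\times p$ matrix. Consider the optimization problem \[ \max_{Y\in\mathbb{S}_+^p}\; -\operatorname{tr}\big(Y\Gamma^{-1}\big)+k_j\log\det\Big(B+\tfrac{1}{k_j}Y\Big)\quad\text{subject to}\quad -k_jB\prec Y . \] Then an optimal solution of this problem is \[ Y^\ast=k_j\,\Gamma^{1/2}\,\mathrm{proj}_{\mathbb{S}_+^p}\Big(I-\Gamma^{-1/2}B\Gamma^{-1/2}\Big)\,\Gamma^{1/2}. \]
   Context: $\mathbb{S}_+^p$ denotes the set of real symmetric positive semi-definite $p\times p$ matrices. For symmetric matrices $X,Y$, $X\prec Y$ means $Y-X$ is positive definite; $I$ is the identity. $\Gamma^{1/2}$ is the symmetric positive definite square root of $\Gamma$ and $\Gamma^{-1/2}$ its inverse. $\mathrm{proj}_{\mathbb{S}_+^p}$ is the Frobenius-norm orthogonal projection onto $\mathbb{S}_+^p$ (for a symmetric matrix with eigen-decomposition $U\mathrm{diag}(\lambda)U^{\mathsf T}$ it equals $U\mathrm{diag}(\max(\lambda,0))U^{\mathsf T}$). *)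

From HB Require Import structures.
From mathcomp Require Import all_boot all_order all_algebra.
From mathcomp Require Import all_classical all_reals all_analysis.
Set Implicit Arguments. Unset Strict Implicit. Unset Printing Implicit Defensive.
Import Order.TTheory GRing.Theory Num.Theory.
Local Open Scope ring_scope.

Definition qform (R : realType) (p : nat) (A : 'M[R]_p) (x : 'cV[R]_p) : R :=
  (x^T *m A *m x) 0 0.

Definition symmx_real (R : realType) (p : nat) (A : 'M[R]_p) : Prop := A^T = A.

Definition psdmx (R : realType) (p : nat) (A : 'M[R]_p) : Prop :=
  symmx_real A /\ forall x : 'cV[R]_p, 0 <= qform A x.

Definition pdmx (R : realType) (p : nat) (A : 'M[R]_p) : Prop :=
  symmx_real A /\ forall x : 'cV[R]_p, x != 0 -> 0 < qform A x.

Definition lt_loewner (R : realType) (p : nat) (X Y : 'M[R]_p) : Prop :=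
  pdmx (Y - X).

Definition frob2 (R : realType) (p : nat) (A : 'M[R]_p) : R :=
  \sum_(i < p) \sum_(j < p) (A i j) ^+ 2.

Definition is_sqrtmx (R : realType) (p : nat) (G S : 'M[R]_p) : Prop :=
  pdmx S /\ S *m S = G.

Definition is_proj_psd (R : realType) (p : nat) (X P : 'M[R]_p) : Prop :=
  psdmx P /\ forall Q : 'M[R]_p, psdmx Q -> frob2 (X - P) <= frob2 (X - Q).

Definition objective (R : realType) (p : nat) (k : R) (G B Y : 'M[R]_p) : R :=
  - \tr (Y *m invmx G) + k * ln (\det (B + k^-1 *: Y)).

Definition feasible (R : realType) (p : nat) (k : R) (B Y : 'M[R]_p) : Prop :=
  psdmx Y /\ lt_loewner (- (k *: B)) Y.

Definition is_optimal (R : realType) (p : nat) (k : R) (G B Y : 'M[R]_p) : Prop :=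
  feasible k B Y /\
  forall Y' : 'M[R]_p, feasible k B Y' -> objective k G B Y' <= objective k G B Y.

From HB Require Import structures.
From mathcomp Require Import all_boot all_order all_algebra.
From mathcomp Require Import all_classical all_reals all_analysis.
From mathcomp Require Import ring lra.
Import Order.TTheory GRing.Theory Num.Theory.
Local Open Scope ring_scope.
Set Implicit Arguments. Unset Strict Implicit. Unset Printing Implicit Defensive.

(* Write G = Γ^{1/2}, C = G^{-1} B G^{-1}.  The substitution Y = k G Z G turns
   the problem into maximising f(Z) = -tr Z + ln det (C + Z) over Z ⪰ 0 with
   C + Z ≻ 0, up to the factor k and an additive constant.  The projection P of
   I - C onto the psd cone satisfies the Moreau decomposition N := P - (I - C) ⪰ 0,
   N P = 0, so M := C + P = I + N.  The tangent-line inequality for the concave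
   function ln det at M gives
     f(Z) <= f(P) + tr ((I - M^{-1}) P) - tr ((I - M^{-1}) Z),
   and I - M^{-1} = N M^{-1} is psd with (I - M^{-1}) P = N M^{-1} P having zero
   trace, so f(Z) <= f(P). *)


Section PsdLogdet.
Variable R : realType.

Lemma affine_near0_ge0 (a b : R) : (forall s, 0 < s < 1 -> 0 <= a + s * b) -> 0 <= a.
Proof.
move=> h; rewrite leNgt; apply/negP => a_lt0.
set d := `|b| - a + 1.
have d_gt0 : 0 < d by rewrite /d; have := normr_ge0 b; lra.
set s := - a / d.
have sd : s * d = - a by rewrite /s mulrVK // unitfE gt_eqF.
have s_gt0 : 0 < s by rewrite /s divr_gt0 // oppr_gt0.
have s_lt1 : s < 1 by rewrite /s ltr_pdivrMr // mul1r /d; have := normr_ge0 b; lra.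
have := h s; rewrite s_gt0 s_lt1 => /(_ isT) h_s.
have sb_le : s * b <= s * `|b| := ler_wpM2l (ltW s_gt0) (ler_norm b).
have : 0 <= (a + s * `|b|) * d by apply: mulr_ge0; [lra | exact: ltW].
rewrite mulrDl -mulrA (mulrC `|b|) mulrA sd /d; nra.
Qed.

Lemma sqr_le_of_quadratic_ge0 (a b c : R) : 0 <= a ->
  (forall t, 0 <= a * t ^+ 2 + 2 * t * b + c) -> b ^+ 2 <= a * c.
Proof.
rewrite le0r => /orP [/eqP a0 | a_gt0] h.
  suff -> : b = 0 by rewrite a0 expr0n /= mul0r.
  apply/eqP; apply/negPn/negP => b_neq0.
  have := h (- (`|c| + 1) / (2 * b)); rewrite a0 mul0r add0r.
  have -> : 2 * (- (`|c| + 1) / (2 * b)) * b = - (`|c| + 1) by field.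
  have := ler_norm c; lra.
have := h (- b / a).
have -> : a * (- b / a) ^+ 2 + 2 * (- b / a) * b + c = c - b ^+ 2 / a.
  by field; rewrite gt_eqF.
by rewrite subr_ge0 ler_pdivrMr // mulrC.
Qed.

Lemma qformD n (A B : 'M[R]_n) x : qform (A + B) x = qform A x + qform B x.
Proof. by rewrite /qform mulmxDr mulmxDl mxE. Qed.

Lemma qformN n (A : 'M[R]_n) x : qform (- A) x = - qform A x.
Proof. by rewrite /qform mulmxN mulNmx mxE. Qed.

Lemma qformZ n (k : R) (A : 'M[R]_n) x : qform (k *: A) x = k * qform A x.
Proof. by rewrite /qform -scalemxAr -scalemxAl mxE. Qed.

Lemma qform_conj m n (M : 'M[R]_(m, n)) (A : 'M[R]_m) x :
  qform (M^T *m A *m M) x = qform A (M *m x).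
Proof. by rewrite /qform trmx_mul !mulmxA. Qed.

Lemma qform1 n (x : 'cV[R]_n) : qform 1%:M x = \sum_i x i 0 ^+ 2.
Proof. by rewrite /qform mulmx1 mxE; apply: eq_bigr => i _; rewrite mxE expr2. Qed.

Lemma qform_block_mx n (a : 'M[R]_1) (u : 'rV[R]_n) (D : 'M[R]_n) (t : R) y :
  qform (block_mx a u u^T D) (col_mx t%:M y) =
  a 0 0 * t ^+ 2 + 2 * t * (u *m y) 0 0 + qform D y.
Proof.
rewrite /qform tr_col_mx tr_scalar_mx mul_row_block mul_row_col.
rewrite !mulmxDl !mul_scalar_mx !mul_mx_scalar -!scalemxAl.
have -> : y^T *m u^T = (u *m y)^T by rewrite trmx_mul.
rewrite !mxE; ring.
Qed.

Lemma mxtrace_mulmxT m n (A : 'M[R]_(m, n)) :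
  \tr (A *m A^T) = \sum_i \sum_j A i j ^+ 2.
Proof.
by apply: eq_bigr => i _; rewrite mxE; apply: eq_bigr => j _; rewrite mxE expr2.
Qed.

Lemma mxtrace_mulmxT_ge0 m n (A : 'M[R]_(m, n)) : 0 <= \tr (A *m A^T).
Proof.
by rewrite mxtrace_mulmxT; do 2![apply: sumr_ge0 => ? _]; exact: sqr_ge0.
Qed.

Lemma mxtrace_mulmxT_eq0 m n (A : 'M[R]_(m, n)) : \tr (A *m A^T) = 0 -> A = 0.
Proof.
have sum_ge0 i : 0 <= \sum_j A i j ^+ 2 by apply: sumr_ge0 => j _; exact: sqr_ge0.
rewrite mxtrace_mulmxT => /(psumr_eq0P (fun i _ => sum_ge0 i)) rows0.
apply/matrixP => i j; rewrite mxE.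
have /(psumr_eq0P (fun j _ => sqr_ge0 (A i j))) := rows0 i isT.
by move/(_ j isT)/eqP; rewrite sqrf_eq0 => /eqP.
Qed.

Lemma psdD n (A B : 'M[R]_n) : psdmx A -> psdmx B -> psdmx (A + B).
Proof.
move=> [sA qA] [sB qB]; split; first by rewrite /symmx_real linearD /= sA sB.
by move=> x; rewrite qformD addr_ge0.
Qed.

Lemma psdZ n (k : R) (A : 'M[R]_n) : 0 <= k -> psdmx A -> psdmx (k *: A).
Proof.
move=> k_ge0 [sA qA]; split; first by rewrite /symmx_real linearZ /= sA.
by move=> x; rewrite qformZ mulr_ge0.
Qed.

Lemma pdZ n (k : R) (A : 'M[R]_n) : 0 < k -> pdmx A -> pdmx (k *: A).
Proof.
move=> k_gt0 [sA qA]; split; first by rewrite /symmx_real linearZ /= sA.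
by move=> x x_neq0; rewrite qformZ mulr_gt0 // qA.
Qed.

Lemma psd_conj m n (A : 'M[R]_m) (M : 'M[R]_(m, n)) : psdmx A -> psdmx (M^T *m A *m M).
Proof.
move=> [sA qA]; split; last by move=> x; rewrite qform_conj.
by rewrite /symmx_real !trmx_mul trmxK sA mulmxA.
Qed.

Lemma pd_conj n (A M : 'M[R]_n) : M \in unitmx -> pdmx A -> pdmx (M^T *m A *m M).
Proof.
move=> M_unit [sA qA]; split; first by rewrite /symmx_real !trmx_mul trmxK sA mulmxA.
move=> x x_neq0; rewrite qform_conj qA //.
by apply: contra x_neq0 => /eqP Mx0; rewrite -(mulKmx M_unit x) Mx0 mulmx0.
Qed.

Lemma psd1 n : psdmx (1%:M : 'M[R]_n).
Proof.
split; first by rewrite /symmx_real tr_scalar_mx.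
by move=> x; rewrite qform1; apply: sumr_ge0 => i _; exact: sqr_ge0.
Qed.

Lemma psd_mulTmx m n (M : 'M[R]_(m, n)) : psdmx (M^T *m M).
Proof. by have := psd_conj M (psd1 m); rewrite mulmx1. Qed.

Lemma pd_psd n (A : 'M[R]_n) : pdmx A -> psdmx A.
Proof.
move=> [sA qA]; split => // x.
have [->|x_neq0] := eqVneq x 0; first by rewrite /qform mulmx0 mxE.
exact/ltW/qA.
Qed.

Lemma pd_unitmx n (A : 'M[R]_n) : pdmx A -> A \in unitmx.
Proof.
move=> [sA qA]; rewrite unitmxE unitfE; apply/negP => /det0P [v v_neq0 vA0].
have vT_neq0 : v^T != 0 by apply: contra v_neq0 => /eqP h; rewrite -[v]trmxK h trmx0.
by have := qA _ vT_neq0; rewrite /qform trmxK vA0 mul0mx mxE ltxx.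
Qed.

Lemma pd1D n (N : 'M[R]_n) : psdmx N -> pdmx (1%:M + N).
Proof.
move=> [sN qN]; split; first by rewrite /symmx_real linearD /= sN tr_scalar_mx.
move=> x x_neq0; rewrite qformD qform1.
suff : 0 < \sum_i x i 0 ^+ 2 by have := qN x; lra.
rewrite lt0r sumr_ge0 ?andbT; last by move=> i _; exact: sqr_ge0.
apply: contra x_neq0 => /eqP /(psumr_eq0P (fun i _ => sqr_ge0 (x i 0))) x0.
apply/eqP/matrixP => i j; rewrite (ord1 j) mxE.
by have /eqP := x0 i isT; rewrite sqrf_eq0 => /eqP.
Qed.

(** * Cholesky factorization *)

Lemma qform_mulmxT n (v y : 'cV[R]_n) : qform (v *m v^T) y = ((v^T *m y) 0 0) ^+ 2.
Proof.
have := qform_conj v^T (1%:M : 'M[R]_1) y.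
by rewrite trmxK mulmx1 => ->; rewrite qform1 big_ord1.
Qed.

Lemma psd_block_factor n (a : 'M[R]_1) (u : 'rV[R]_n) (D : 'M[R]_n) :
  psdmx (block_mx a u u^T D) ->
  exists l (v : 'cV[R]_n), [/\ a = (l ^+ 2)%:M, l *: v^T = u & psdmx (D - v *m v^T)].
Proof.
move=> [sA qA].
have [_ _ _ sD] := eq_block_mx (etrans (esym (tr_block_mx _ _ _ _)) sA).
set al := a 0 0.
have q t y : 0 <= al * t ^+ 2 + 2 * t * (u *m y) 0 0 + qform D y.
  by rewrite -qform_block_mx; exact: qA.
have al_ge0 : 0 <= al by have := q 1 0; rewrite mulmx0 /qform mulmx0 !mxE; lra.
have discr y := sqr_le_of_quadratic_ge0 al_ge0 (q ^~ y).
have u0 : al = 0 -> u = 0.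
  move=> al0; apply/rowP => j; rewrite mxE.
  have := discr (delta_mx j 0); rewrite al0 mul0r -colE mxE => uj2_le0.
  by apply/eqP; rewrite -sqrf_eq0 eq_le uj2_le0 sqr_ge0.
set l := Num.sqrt al.
(* When al = 0, l^-1 = 0 is a junk value, harmless because then u = 0. *)
exists l, (l^-1 *: u^T); split.
- by rewrite sqr_sqrtr //; exact: mx11_scalar.
- have [al0|al_neq0] := eqVneq al 0; first by rewrite u0 // trmx0 scaler0 trmx0 scaler0.
  have l_neq0 : l != 0 by rewrite sqrtr_eq0 -ltNge lt0r al_neq0.
  by rewrite linearZ /= trmxK scalerA mulfV ?scale1r.
split; first by rewrite /symmx_real linearB /= trmx_mul trmxK sD.
move=> y; rewrite qformD qformN qform_mulmxT.
rewrite [(_ *: _)^T]linearZ /= trmxK -scalemxAl mxE.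
rewrite exprMn exprVn sqr_sqrtr // mulrC subr_ge0.
have [al0|al_neq0] := eqVneq al 0.
  by rewrite al0 invr0 mulr0; have := q 0 y; rewrite expr0n /= !mulr0 !mul0r !add0r.
by rewrite ler_pdivrMr ?lt0r ?al_neq0 // mulrC discr.
Qed.

Lemma psd_cholesky n (A : 'M[R]_n) :
  psdmx A -> exists2 L : 'M[R]_n, is_trig_mx L & A = L *m L^T.
Proof.
elim: n A => [|n IH] A psdA.
  by exists 0; [exact: mx0_is_trig | apply/matrixP => [[]]].
change (exists2 L : 'M[R]_(1 + n), is_trig_mx L & A = L *m L^T).
set a := ulsubmx (A : 'M[R]_(1 + n)); set u := ursubmx (A : 'M[R]_(1 + n)).
set D := drsubmx (A : 'M[R]_(1 + n)).
have AE : A = block_mx a u u^T D by rewrite /a /u /D trmx_ursub psdA.1 submxK.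
rewrite AE in psdA.
have [l [v [aE uE /IH [L' L'trig L'E]]]] := psd_block_factor psdA.
exists (block_mx l%:M 0 v L').
  by rewrite is_trig_block_mx // eqxx scalar_mx_is_trig L'trig.
rewrite AE tr_block_mx trmx0 tr_scalar_mx mulmx_block !mulmx0 !mul0mx !addr0.
rewrite -scalar_mxM -expr2 mul_scalar_mx mul_mx_scalar -L'E addrC subrK.
by rewrite aE -uE linearZ /= trmxK.
Qed.

(** * Projection onto the psd cone *)

Lemma mxtrace_gram_mul n (M L : 'M[R]_n) :
  \tr (M *m M^T *m (L *m L^T)) = \tr ((M^T *m L) *m (M^T *m L)^T).
Proof. by rewrite trmx_mul trmxK -!mulmxA mxtrace_mulC !mulmxA. Qed.

Lemma psd_mxtrace_mul_ge0 n (A B : 'M[R]_n) : psdmx A -> psdmx B -> 0 <= \tr (A *m B).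
Proof.
move=> /psd_cholesky [M _ ->] /psd_cholesky [L _ ->].
by rewrite mxtrace_gram_mul mxtrace_mulmxT_ge0.
Qed.

Lemma psd_mxtrace_mul_eq0 n (A B : 'M[R]_n) :
  psdmx A -> psdmx B -> \tr (A *m B) = 0 -> A *m B = 0.
Proof.
move=> /psd_cholesky [M _ ->] /psd_cholesky [L _ ->].
rewrite mxtrace_gram_mul => /mxtrace_mulmxT_eq0 ML0.
by rewrite -mulmxA (mulmxA M^T) ML0 mul0mx mulmx0.
Qed.

Lemma qform_mxtrace n (A : 'M[R]_n) x : qform A x = \tr (A *m (x *m x^T)).
Proof. by rewrite /qform -trace_mx11 -mulmxA mxtrace_mulC mulmxA. Qed.

Lemma frob2_addZ n (A H : 'M[R]_n) (t : R) : H^T = H ->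
  frob2 (A + t *: H) = frob2 A + 2 * t * \tr (A *m H) + t ^+ 2 * frob2 H.
Proof.
move=> sH; rewrite /frob2 -!mxtrace_mulmxT.
rewrite linearD linearZ /= sH mulmxDl !mulmxDr -!scalemxAl -!scalemxAr.
rewrite !mxtraceD !mxtraceZ.
have -> : \tr (H *m A^T) = \tr (A *m H) by rewrite -mxtrace_tr trmx_mul trmxK sH.
ring.
Qed.

Lemma frob2_min_dir n (A H : 'M[R]_n) : H^T = H ->
  (forall s, 0 < s < 1 -> frob2 A <= frob2 (A + s *: H)) -> 0 <= \tr (A *m H).
Proof.
move=> sH Amin; suff : 0 <= 2 * \tr (A *m H) by lra.
apply: (@affine_near0_ge0 _ (frob2 H)) => s /andP [s_gt0 s_lt1].
have := Amin s; rewrite s_gt0 s_lt1 frob2_addZ // => /(_ isT) Amin_s.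
rewrite -(pmulr_rge0 _ s_gt0).
have -> : s * (2 * \tr (A *m H) + s * frob2 H)
  = 2 * s * \tr (A *m H) + s ^+ 2 * frob2 H by ring.
lra.
Qed.

Lemma is_proj_psd_moreau n (X P : 'M[R]_n) : symmx_real X -> is_proj_psd X P ->
  psdmx (P - X) /\ (P - X) *m P = 0.
Proof.
move=> sX [psdP Pmin].
(* First-order optimality of P along the feasible rays P + s H and (1 - s) P. *)
have tr_ge0 H : psdmx H -> 0 <= \tr ((P - X) *m H).
  move=> psdH; rewrite (_ : (P - X) *m H = (X - P) *m - H); last first.
    by rewrite mulmxN -mulNmx opprB.
  apply: frob2_min_dir; first by rewrite linearN /= psdH.1.
  move=> s /andP [s_gt0 _]; rewrite scalerN -addrA -opprD.
  by apply/Pmin/psdD => //; exact: psdZ (ltW s_gt0) psdH.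
have psdN : psdmx (P - X).
  split; first by rewrite /symmx_real linearB /= sX psdP.1.
  by move=> x; rewrite qform_mxtrace tr_ge0 // -{1}[x]trmxK; exact: psd_mulTmx.
split => //; apply: psd_mxtrace_mul_eq0 => //.
apply/eqP; rewrite eq_le tr_ge0 // andbT.
rewrite -opprB mulNmx raddfN /= oppr_le0.
apply: frob2_min_dir; first exact: psdP.1.
move=> s /andP [_ s_lt1].
have -> : X - P + s *: P = X - (1 - s) *: P.
  by rewrite scalerBl scale1r opprB addrA addrAC.
by apply/Pmin/psdZ => //; lra.
Qed.

(** * Log-determinant *)

Lemma ln_prod_le n (F : 'I_n -> R) : (forall i, 0 < F i) ->
  ln (\prod_i F i) <= \sum_i (F i - 1).
Proof.
move=> F_gt0.
suff [] : 0 < \prod_i F i /\ ln (\prod_i F i) <= \sum_i (F i - 1) by [].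
apply: (big_rec2 (fun a b => 0 < a /\ ln a <= b)); first by rewrite ln1.
move=> i a b _ [a_gt0 ln_a_le]; split; first by rewrite mulr_gt0.
have Fi_gt0 := F_gt0 i.
have := @le_ln1Dx R (F i - 1); rewrite [1 + _]addrC subrK lnM ?posrE //.
move=> /(_ _); lra.
Qed.

Lemma pd_det_gt0 n (S : 'M[R]_n) : pdmx S -> 0 < \det S.
Proof.
move=> pdS; have := pd_unitmx pdS; have [L _ SE] := psd_cholesky (pd_psd pdS).
rewrite SE unitmxE unitfE det_mulmx det_tr -expr2 => det_neq0.
by rewrite lt0r det_neq0 sqr_ge0.
Qed.

Lemma ln_det_le_trace n (S : 'M[R]_n) : pdmx S -> ln (\det S) <= \tr S - n%:R.
Proof.
move=> pdS; have [L Ltrig SE] := psd_cholesky (pd_psd pdS).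
have detE : \det S = \prod_i L i i ^+ 2.
  by rewrite SE det_mulmx det_tr det_trig // -expr2 prodrXl.
have Lii_gt0 i : 0 < L i i ^+ 2.
  rewrite lt0r sqr_ge0 andbT sqrf_eq0; apply: contraTneq (pd_det_gt0 pdS) => Lii0.
  by rewrite detE (bigD1 i) //= Lii0 expr0n mul0r ltxx.
rewrite detE; apply: le_trans (ln_prod_le Lii_gt0) _.
rewrite sumrB sumr_const card_ord lerD2r SE mxtrace_mulmxT.
apply: ler_sum => i _; rewrite (bigD1 i) //= lerDl.
by apply: sumr_ge0 => j _; exact: sqr_ge0.
Qed.

Lemma invmx_eq n (M Q : 'M[R]_n) : M \in unitmx -> M *m Q = 1%:M -> invmx M = Q.
Proof. by move=> M_unit MQ1; rewrite -[invmx M]mulmx1 -MQ1 mulmxA mulVmx ?mul1mx. Qed.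

Lemma ln_det_le_tangent n (A M : 'M[R]_n) : pdmx A -> pdmx M ->
  ln (\det A) <= ln (\det M) + \tr (invmx M *m A) - n%:R.
Proof.
move=> pdA pdM.
have [L _ ME] := psd_cholesky (pd_psd pdM).
have L_unit : L \in unitmx.
  by move: (pd_unitmx pdM); rewrite ME !unitmxE det_mulmx unitrM => /andP [].
set S := invmx L *m A *m (invmx L)^T.
have pdS : pdmx S.
  have LiT_unit : (invmx L)^T \in unitmx by rewrite unitmx_tr unitmx_inv.
  by have := pd_conj LiT_unit pdA; rewrite trmxK.
have AE : A = L *m S *m L^T.
  rewrite /S trmx_inv !mulmxA mulmxV // mul1mx -mulmxA mulVmx ?unitmx_tr //.
  by rewrite mulmx1.
have invME : invmx M = (invmx L)^T *m invmx L.
  apply: invmx_eq; first exact: pd_unitmx.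
  by rewrite ME trmx_inv mulmxA -(mulmxA L) mulmxV ?unitmx_tr // mulmx1 mulmxV.
have detAE : \det A = \det M * \det S by rewrite {1}AE ME !det_mulmx det_tr; ring.
have trE : \tr (invmx M *m A) = \tr S by rewrite invME -mulmxA mxtrace_mulC.
rewrite detAE lnM ?posrE ?pd_det_gt0 // trE.
have := ln_det_le_trace pdS; lra.
Qed.

Lemma conj_invmxK n (M Z : 'M[R]_n) : M \in unitmx ->
  (invmx M)^T *m (M^T *m Z *m M) *m invmx M = Z.
Proof.
move=> M_unit; rewrite !mulmxA -trmx_mul mulmxV // trmx1 mul1mx.
by rewrite -mulmxA mulmxV // mulmx1.
Qed.

Lemma psd_conj_unitmx n (M Z : 'M[R]_n) : M \in unitmx -> psdmx (M^T *m Z *m M) <-> psdmx Z.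
Proof.
move=> M_unit; split; last exact: psd_conj.
by move=> /(psd_conj (invmx M)); rewrite conj_invmxK.
Qed.

Lemma pd_conj_unitmx n (M Z : 'M[R]_n) : M \in unitmx -> pdmx (M^T *m Z *m M) <-> pdmx Z.
Proof.
move=> M_unit; split; last exact: pd_conj.
have Mi_unit : invmx M \in unitmx by rewrite unitmx_inv.
by move=> /(pd_conj Mi_unit); rewrite conj_invmxK.
Qed.

Lemma psd_scale_pos n (k : R) (A : 'M[R]_n) : 0 < k -> psdmx (k *: A) <-> psdmx A.
Proof.
move=> k_gt0; split; last exact/psdZ/ltW.
have ki_ge0 : 0 <= k^-1 by rewrite invr_ge0 ltW.
by move=> /(psdZ ki_ge0); rewrite scalerA mulVf ?gt_eqF ?scale1r.
Qed.

Lemma pd_scale_pos n (k : R) (A : 'M[R]_n) : 0 < k -> pdmx (k *: A) <-> pdmx A.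
Proof.
move=> k_gt0; split; last exact: pdZ.
have ki_gt0 : 0 < k^-1 by rewrite invr_gt0.
by move=> /(pdZ ki_gt0); rewrite scalerA mulVf ?gt_eqF ?scale1r.
Qed.

Lemma sub1_invmx1D_psd n (N : 'M[R]_n) : psdmx N ->
  1%:M - invmx (1%:M + N) = N *m invmx (1%:M + N) /\ psdmx (1%:M - invmx (1%:M + N)).
Proof.
move=> psdN; have pdM := pd1D psdN; set W := invmx (1%:M + N).
have M_unit := pd_unitmx pdM.
have IWE : 1%:M - W = N *m W.
  by apply/eqP; rewrite subr_eq -[X in _ + X]mul1mx -mulmxDl addrC mulmxV.
have WNE : W *m N = N *m W.
  by apply: (@addrI _ W); rewrite -{1}[W]mulmx1 -mulmxDr mulVmx // -IWE addrC subrK.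
split => //.
have -> : 1%:M - W = W^T *m (N + N^T *m N) *m W.
  have W_sym : W^T = W by rewrite /W trmx_inv pdM.1.
  rewrite W_sym psdN.1 -{1}[N]mulmx1 -mulmxDr !mulmxA -mulmxA mulmxV //.
  by rewrite mulmx1 WNE IWE.
exact/psd_conj/psdD/psd_mulTmx.
Qed.

(* The objective of the problem after the substitution Y = k G Z G, divided by k
   and up to the constant ln det Γ (see objective_conj). *)
Definition logdet_objective n (C Z : 'M[R]_n) : R := - \tr Z + ln (\det (C + Z)).

Lemma logdet_objective_le n (C N P Z : 'M[R]_n) :
  psdmx N -> psdmx P -> N *m P = 0 -> C + P = 1%:M + N ->
  psdmx Z -> pdmx (C + Z) -> logdet_objective C Z <= logdet_objective C P.
Proof.
move=> psdN psdP NP0 CPE psdZ pdCZ.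
have pdM : pdmx (C + P) by rewrite CPE; exact: pd1D.
have [IWE psdIW] := sub1_invmx1D_psd psdN; rewrite -CPE in IWE psdIW.
set W := invmx (C + P) in IWE psdIW *.
have PN0 : P *m N = 0 by rewrite -[P]psdP.1 -[N]psdN.1 -trmx_mul NP0 trmx0.
have trIWP : \tr ((1%:M - W) *m P) = 0.
  by rewrite IWE -mulmxA mxtrace_mulC -mulmxA PN0 mulmx0 mxtrace0.
have trWCZ : \tr (W *m (C + Z)) = n%:R - \tr (W *m P) + \tr (W *m Z).
  have -> : C + Z = C + P - P + Z by rewrite addrK.
  rewrite mulmxDr mulmxBr mulVmx ?pd_unitmx //.
  by rewrite mxtraceD raddfB /= mxtrace1.
have := psd_mxtrace_mul_ge0 psdIW psdZ; have := ln_det_le_tangent pdCZ pdM.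
move: trIWP; rewrite /logdet_objective !mulmxBl !mul1mx !raddfB /= trWCZ; lra.
Qed.

End PsdLogdet.

Section ChangeOfVariables.
Variables (R : realType) (n : nat) (k : R) (G B : 'M[R]_n).
Hypotheses (k_gt0 : 0 < k) (G_sym : G^T = G) (G_unit : G \in unitmx).

Let C := invmx G *m B *m invmx G.

Lemma conj_invmx_mulmxK (X : 'M[R]_n) : G *m (invmx G *m X *m invmx G) *m G = X.
Proof. by rewrite !mulmxA mulmxV // mul1mx mulmxKV. Qed.

Lemma scale_conj_invmxK (Y : 'M[R]_n) :
  k *: (G *m (invmx G *m (k^-1 *: Y) *m invmx G) *m G) = Y.
Proof. by rewrite conj_invmx_mulmxK scalerA mulfV ?gt_eqF ?scale1r. Qed.

Lemma feasible_conj (Z : 'M[R]_n) :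
  feasible k B (k *: (G *m Z *m G)) <-> psdmx Z /\ pdmx (C + Z).
Proof.
rewrite /feasible /lt_loewner opprK -[B]conj_invmx_mulmxK -scalerDr.
rewrite -mulmxDl -mulmxDr -{1 3}G_sym addrC.
by rewrite psd_scale_pos // psd_conj_unitmx // pd_scale_pos // pd_conj_unitmx.
Qed.

Lemma objective_conj (Z : 'M[R]_n) : pdmx (C + Z) ->
  objective k (G *m G) B (k *: (G *m Z *m G)) =
  k * ln (\det G ^+ 2) + k * logdet_objective C Z.
Proof.
move=> pdCZ.
have GGi : invmx (G *m G) = invmx G *m invmx G.
  by apply: invmx_eq; rewrite ?unitmx_mul ?G_unit // mulmxA mulmxK ?mulmxV.
have detG2_gt0 : 0 < \det G ^+ 2.
  by rewrite lt0r sqr_ge0 andbT sqrf_eq0 -unitfE -unitmxE.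
rewrite /objective /logdet_objective scalerA mulVf ?gt_eqF // scale1r.
rewrite -{1}[B]conj_invmx_mulmxK -mulmxDl -mulmxDr !det_mulmx mulrAC -expr2.
rewrite lnM ?posrE ?pd_det_gt0 // GGi -scalemxAl mxtraceZ !mulmxA mulmxK //.
by rewrite mxtrace_mulC mulmxA mulVmx // mul1mx; ring.
Qed.

End ChangeOfVariables.

Theorem mainTheorem2 (R : realType) (p : nat) (hp : (1 <= p)%N) (kj : R)
    (hk : 0 < kj) (Gamma B : 'M[R]_p) (hG : pdmx Gamma) (hB : symmx_real B)
    (G12 P : 'M[R]_p) (hG12 : is_sqrtmx Gamma G12)
    (hP : is_proj_psd (1%:M - invmx G12 *m B *m invmx G12) P) :
  is_optimal kj Gamma B (kj *: (G12 *m P *m G12)).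
Proof.
case: hG12 => pdG <-; have G_unit := pd_unitmx pdG.
set C := invmx G12 *m B *m invmx G12 in hP *.
have C_sym : symmx_real C by rewrite /C /symmx_real !trmx_mul trmx_inv pdG.1 hB mulmxA.
have X_sym : symmx_real (1%:M - C) by rewrite /symmx_real linearB /= tr_scalar_mx C_sym.
have [psdN NP0] := is_proj_psd_moreau X_sym hP.
have CPE : C + P = 1%:M + (P - (1%:M - C)).
  by rewrite opprB [RHS]addrCA [1%:M + _]addrC subrK addrC.
have pdCP : pdmx (C + P) by rewrite CPE; exact: pd1D.
have feasE := feasible_conj B hk pdG.1 G_unit.
split; first by apply/feasE; split; [exact: hP.1 | exact: pdCP].
move=> Y feasY; rewrite -(scale_conj_invmxK hk G_unit Y) in feasY *.
have [psdZ pdCZ] := (feasE _).1 feasY.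
rewrite !objective_conj // lerD2l ler_pM2l //.
exact: logdet_objective_le psdN hP.1 NP0 CPE psdZ pdCZ.
Qed.
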